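(* Let $V$ be a vector space and $Mag(V)$ the free unital magmatic algebra with its reduced coproduct $\delta$. For a planar binary rooted tree $t$ with $r$ leaves and $v_1,\dots,v_r\in V$, $$\delta(t;v_1\dots v_r)=\sum_{i=1}^{r-1}(t^i_{(1)};v_1\dots v_i)\otimes(t^i_{(2)};v_{i+1}\dots v_r).$$
   Context: $Mag(V)=\bigoplus_{n\ge0}\mathbb K[Y_{n-1}]\otimes V^{\otimes n}$, $Y_{n-1}$ the set of planar binary rooted trees with $n$ leaves ($n=0$ summand $\mathbb K1$), product $(t;v_1\dots v_p)\cdot(s;v_{p+1}\dots v_{p+q})=(t\vee s;v_1\dots v_{p+q})$ by grafting on a new root. $\Delta$ is the unique linear map with $\Delta(1)=1\otimes1$, $\Delta(v)=v\otimes1+1\otimes v$ ($v\in V$) and $\Delta(x\cdot y)=\Delta(x)\cdot(1\otimes y)+(x\otimes1)\cdot\Delta(y)-x\otimes y$ (componentwise product on the tensor square); $\delta(x)=\Delta(x)-x\otimes1-1\otimes x$ on the augmentation ideal. Splitting: number the leaves of $t$ from $1$ to $r$ left to right; for $1\le i<r$, $t^i_{(1)}$ is the part of $t$ lying on the left of the path from leaf $i$ to the root (this path included) and $t^i_{(2)}$ is the part of $t$ lying on the right of the path from leaf $i+1$ to the root (this path included), each regarded as a planar binary tree (with $i$, resp. $r-i$, leaves) after erasing vertices with only one input. E.g. for $t=(x_1x_2)(x_3x_4)$ split at $i=2$, one gets $x_1x_2$ and $x_3x_4$. *)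

From HB Require Import structures.
From mathcomp Require Import all_boot all_order all_algebra.
From mathcomp Require Import finmap monalg.
Set Implicit Arguments. Unset Strict Implicit. Unset Printing Implicit Defensive.
Import GRing.Theory.
Local Open Scope ring_scope.

Inductive btree := BLeaf | BNode of btree & btree.

Fixpoint leaves (t : btree) : nat :=
  match t with BLeaf => 1%N | BNode l r => (leaves l + leaves r)%N end.

(* t^i_(1): part of t on the left of the path from leaf i to the root
   (path included), unary vertices erased; it has i leaves (1 <= i). *)
Fixpoint tree_split1 (t : btree) (i : nat) : btree :=
  match t with
  | BLeaf => BLeaf
  | BNode l r => if (i <= leaves l)%N then tree_split1 l i
                 else BNode l (tree_split1 r (i - leaves l))
  end.

(* Part of t on the right of the path from leaf j to the root (path
   included), unary vertices erased; it has (leaves t - j + 1) leaves. *)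
Fixpoint tree_split_right (t : btree) (j : nat) : btree :=
  match t with
  | BLeaf => BLeaf
  | BNode l r => if (leaves l < j)%N then tree_split_right r (j - leaves l)
                 else BNode (tree_split_right l j) r
  end.

(* t^i_(2): the part on the right of the path from leaf i+1 to the root. *)
Definition tree_split2 (t : btree) (i : nat) : btree := tree_split_right t i.+1.

(* Planar binary trees with leaves labelled in X: the free magma on X. *)
Inductive ltree (X : Type) := LLeaf of X | LNode of ltree X & ltree X.
Arguments LLeaf {X}. Arguments LNode {X}.

Fixpoint ltree_enc X (t : ltree X) : GenTree.tree X :=
  match t with
  | LLeaf x => GenTree.Leaf x
  | LNode l r => GenTree.Node 0 [:: ltree_enc l; ltree_enc r]
  end.
Fixpoint ltree_dec X (g : GenTree.tree X) : option (ltree X) :=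
  match g with
  | GenTree.Leaf x => Some (LLeaf x)
  | GenTree.Node _ [:: l; r] =>
      match ltree_dec l, ltree_dec r with
      | Some l', Some r' => Some (LNode l' r')
      | _, _ => None end
  | _ => None
  end.
Lemma ltree_encK X : pcancel (@ltree_enc X) (@ltree_dec X).
Proof. by elim=> [x|l IHl r IHr] //=; rewrite IHl IHr. Qed.

HB.instance Definition _ (X : choiceType) :=
  Choice.copy (ltree X) (pcan_type (@ltree_encK X)).

(* Basis of Mag(V) for V the vector space with basis X:
   None = the unit 1 (n = 0), Some t = a labelled tree (t; x_1 ... x_n). *)
Definition mbasis (X : choiceType) := option (ltree X).

Definition bmul (X : choiceType) (a b : mbasis X) : mbasis X :=
  match a, b with
  | None, _ => b
  | _, None => a
  | Some s, Some t => Some (LNode s t)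
  end.

Definition bilin (R : nzRingType) (A B C : choiceType) (f : A -> B -> C)
  (a : {malg R[A]}) (b : {malg R[B]}) : {malg R[C]} :=
  \sum_(p <- msupp a) \sum_(q <- msupp b) (a@_p * b@_q) *: << f p q >>.

(* V = vector space with basis X (every vector space is of this form). *)
Definition Vsp (K : fieldType) (X : choiceType) := {malg K[X]}.
Definition Mag (K : fieldType) (X : choiceType) := {malg K[mbasis X]}.
Definition Mag2 (K : fieldType) (X : choiceType) :=
  {malg K[(mbasis X * mbasis X)%type]}.

Section Ops.
Variables (K : fieldType) (X : choiceType).

Definition mag_one : Mag K X := << None >>.
Definition mag_mul (a b : Mag K X) : Mag K X := bilin (@bmul X) a b.
Definition tens (a b : Mag K X) : Mag2 K X := bilin (fun p q => (p, q)) a b.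
Definition mag2_mul (u w : Mag2 K X) : Mag2 K X :=
  bilin (fun p q => (bmul p.1 q.1, bmul p.2 q.2)) u w.
Definition vinc (v : Vsp K X) : Mag K X :=
  \sum_(x <- msupp v) v@_x *: << Some (LLeaf x) >>.

(* (t; v_1 ... v_r): defined through the product (grafting on a new root),
   i.e. multilinear in the v_i; vectors beyond/short of the leaves are
   irrelevant since the theorem assumes size vs = leaves t. *)
Fixpoint elem (t : btree) (vs : seq (Vsp K X)) : Mag K X :=
  match t with
  | BLeaf => vinc (head 0 vs)
  | BNode l r => mag_mul (elem l (take (leaves l) vs))
                         (elem r (drop (leaves l) vs))
  end.

Definition reduced (D : Mag K X -> Mag2 K X) (x : Mag K X) : Mag2 K X :=
  D x - tens x mag_one - tens mag_one x.
End Ops.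

(* Writing Δ = δ + (_ ⊗ 1) + (1 ⊗ _), the product rule
   for Δ becomes  δ(xy) = x ⊗ y + δ(x)·(1 ⊗ y) + (x ⊗ 1)·δ(y).  For t = l ∨ r
   with p = leaves l, the cuts of t at i < p are the cuts of l with r grafted
   onto their right part, the cut at p is l ⊗ r, and the cuts at p + j are the
   cuts of r with l grafted onto their left part: these are the three terms. *)

From HB Require Import structures.
From mathcomp Require Import all_boot all_order all_algebra.
From mathcomp Require Import finmap monalg.
From mathcomp Require Import zify.
Set Implicit Arguments. Unset Strict Implicit. Unset Printing Implicit Defensive.
Import GRing.Theory.
Local Open Scope ring_scope.

Section MalgBasis.
Variables (R : nzRingType) (A : choiceType).

Lemma monalgUZ (c : R) (k : A) : << c *g k >> = c *: << k >> :> {malg R[A]}.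
Proof. by apply/malgP => k'; rewrite mcoeffZ !mcoeffU mulr_natr. Qed.

Lemma malg_ind (P : {malg R[A]} -> Prop) :
  P 0 -> (forall k, P << k >>) -> (forall c g, P g -> P (c *: g)) ->
  (forall g1 g2, P g1 -> P g2 -> P (g1 + g2)) -> forall g, P g.
Proof.
move=> P0 PU PZ PD g; rewrite (monalgE g).
by apply: big_ind => // k _; rewrite monalgUZ; apply/PZ/PU.
Qed.
End MalgBasis.

Section Bilinear.
Variables (R : comNzRingType) (A B C : choiceType) (f : A -> B -> C).

Lemma bilinEw (a : {malg R[A]}) (b : {malg R[B]}) (da : {fset A}) (db : {fset B}) :
  (msupp a `<=` da)%fset -> (msupp b `<=` db)%fset ->
  bilin f a b = \sum_(p <- da) \sum_(q <- db) (a@_p * b@_q) *: << f p q >>.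
Proof.
move=> ha hb; rewrite /bilin (big_fset_incl _ ha); last first.
  by move=> p _ /mcoeff_outdom ->; apply: big1 => q _; rewrite mul0r scale0r.
apply: eq_bigr => p _; apply: big_fset_incl hb _ => q _ /mcoeff_outdom ->.
by rewrite mulr0 scale0r.
Qed.

Lemma bilinDl (a1 a2 : {malg R[A]}) (b : {malg R[B]}) :
  bilin f (a1 + a2) b = bilin f a1 b + bilin f a2 b.
Proof.
rewrite (bilinEw (msuppD_le a1 a2) (fsubset_refl _)).
rewrite (bilinEw (fsubsetUl _ (msupp a2)) (fsubset_refl _)).
rewrite (bilinEw (fsubsetUr (msupp a1) _) (fsubset_refl _)) -big_split.
by apply: eq_bigr => p _; rewrite -big_split; apply: eq_bigr => q _;
  rewrite mcoeffD mulrDl scalerDl.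
Qed.

Lemma bilinDr (a : {malg R[A]}) (b1 b2 : {malg R[B]}) :
  bilin f a (b1 + b2) = bilin f a b1 + bilin f a b2.
Proof.
rewrite (bilinEw (fsubset_refl _) (msuppD_le b1 b2)).
rewrite (bilinEw (fsubset_refl _) (fsubsetUl _ (msupp b2))).
rewrite (bilinEw (fsubset_refl _) (fsubsetUr (msupp b1) _)) -big_split.
by apply: eq_bigr => p _; rewrite -big_split; apply: eq_bigr => q _;
  rewrite mcoeffD mulrDr scalerDl.
Qed.

Lemma bilinZl (c : R) (a : {malg R[A]}) (b : {malg R[B]}) :
  bilin f (c *: a) b = c *: bilin f a b.
Proof.
rewrite (bilinEw (msuppZ_le c a) (fsubset_refl _)) /bilin scaler_sumr.
apply: eq_bigr => p _; rewrite scaler_sumr; apply: eq_bigr => q _.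
by rewrite mcoeffZ scalerA mulrA.
Qed.

Lemma bilinZr (c : R) (a : {malg R[A]}) (b : {malg R[B]}) :
  bilin f a (c *: b) = c *: bilin f a b.
Proof.
rewrite (bilinEw (fsubset_refl _) (msuppZ_le c b)) /bilin scaler_sumr.
apply: eq_bigr => p _; rewrite scaler_sumr; apply: eq_bigr => q _.
by rewrite mcoeffZ scalerA mulrCA.
Qed.

Lemma bilin0l (b : {malg R[B]}) : bilin f (0 : {malg R[A]}) b = 0.
Proof. by rewrite /bilin msupp0 big_nil. Qed.

Lemma bilin0r (a : {malg R[A]}) : bilin f a (0 : {malg R[B]}) = 0.
Proof. by rewrite /bilin msupp0; apply: big1 => p _; rewrite big_nil. Qed.

Lemma bilinUU (p : A) (q : B) :
  bilin f (<< p >> : {malg R[A]}) (<< q >> : {malg R[B]}) = << f p q >>.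
Proof.
by rewrite /bilin !msuppU !oner_eq0 !big_seq_fset1 !mcoeffU !eqxx mulr1 scale1r.
Qed.

Lemma bilin_suml I (r : seq I) (P : pred I) (F : I -> {malg R[A]}) b :
  bilin f (\sum_(i <- r | P i) F i) b = \sum_(i <- r | P i) bilin f (F i) b.
Proof. exact: (big_morph (bilin f ^~ b) (fun x y => bilinDl x y b) (bilin0l b)). Qed.

Lemma bilin_sumr I (r : seq I) (P : pred I) (F : I -> {malg R[B]}) a :
  bilin f a (\sum_(i <- r | P i) F i) = \sum_(i <- r | P i) bilin f a (F i).
Proof. exact: (big_morph (bilin f a) (bilinDr a) (bilin0r a)). Qed.
End Bilinear.

Definition bilinE := (bilin0l, bilin0r, bilinZl, bilinZr, bilinDl, bilinDr).

Lemma bilin_idl (R : comNzRingType) (A B : choiceType) (f : A -> B -> B) p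
  (b : {malg R[B]}) : (forall q, f p q = q) -> bilin f << p >> b = b.
Proof.
move=> fp; elim/malg_ind: b => [|q|c b IH|b1 b2 IH1 IH2];
  by rewrite ?bilinE ?bilinUU ?fp ?IH ?IH1 ?IH2.
Qed.

Lemma bilin_idr (R : comNzRingType) (A B : choiceType) (f : A -> B -> A) q
  (a : {malg R[A]}) : (forall p, f p q = p) -> bilin f a << q >> = a.
Proof.
move=> fq; elim/malg_ind: a => [|p|c a IH|a1 a2 IH1 IH2];
  by rewrite ?bilinE ?bilinUU ?fq ?IH ?IH1 ?IH2.
Qed.

Lemma bilin_interchange (R : comNzRingType) (A B C D E F G H : choiceType)
  (f : A -> B -> E) (g : C -> D -> F) (h : E -> F -> H)
  (f' : A -> C -> G) (g' : B -> D -> G) (k : G -> G -> H) :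
  (forall p q r s, h (f p q) (g r s) = k (f' p r) (g' q s)) ->
  forall (a : {malg R[A]}) (b : {malg R[B]}) (c : {malg R[C]}) (d : {malg R[D]}),
  bilin h (bilin f a b) (bilin g c d) = bilin k (bilin f' a c) (bilin g' b d).
Proof.
move=> hk a b c d.
elim/malg_ind: a => [|p|x a IH|a1 a2 IH1 IH2]; rewrite ?bilinE ?IH ?IH1 ?IH2 //.
elim/malg_ind: b => [|q|x b IH|b1 b2 IH1 IH2]; rewrite ?bilinE ?IH ?IH1 ?IH2 //.
elim/malg_ind: c => [|r|x c IH|c1 c2 IH1 IH2]; rewrite ?bilinE ?IH ?IH1 ?IH2 //.
elim/malg_ind: d => [|s|x d IH|d1 d2 IH1 IH2]; rewrite ?bilinE ?IH ?IH1 ?IH2 //.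
by rewrite !bilinUU hk.
Qed.

Section MagmaticAlgebra.
Variables (K : fieldType) (X : choiceType).
Local Notation one := (mag_one K X).

Lemma mag_mul1x (x : Mag K X) : mag_mul one x = x.
Proof. exact: bilin_idl. Qed.

Lemma mag_mulx1 (x : Mag K X) : mag_mul x one = x.
Proof. by apply: bilin_idr; case. Qed.

Lemma mag2_mulDl (u1 u2 w : Mag2 K X) :
  mag2_mul (u1 + u2) w = mag2_mul u1 w + mag2_mul u2 w.
Proof. exact: bilinDl. Qed.

Lemma mag2_mulDr (u w1 w2 : Mag2 K X) :
  mag2_mul u (w1 + w2) = mag2_mul u w1 + mag2_mul u w2.
Proof. exact: bilinDr. Qed.

Lemma mag2_mul_tens (a b c d : Mag K X) :
  mag2_mul (tens a b) (tens c d) = tens (mag_mul a c) (mag_mul b d).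
Proof. exact: bilin_interchange. Qed.

Lemma reduced_mul (D : Mag K X -> Mag2 K X) :
  (forall x y, D (mag_mul x y) =
     mag2_mul (D x) (tens one y) + mag2_mul (tens x one) (D y) - tens x y) ->
  forall a b, reduced D (mag_mul a b) =
    tens a b + mag2_mul (reduced D a) (tens one b)
             + mag2_mul (tens a one) (reduced D b).
Proof.
move=> DM a b.
have DE x : D x = reduced D x + tens x one + tens one x.
  by rewrite /reduced addrAC !subrK.
rewrite {1}/reduced DM (DE a) (DE b).
move: (reduced D a) (reduced D b) => ra rb.
rewrite !mag2_mulDl !mag2_mulDr !mag2_mul_tens !mag_mul1x !mag_mulx1.
move: (mag2_mul ra _) (tens a b) (tens one (mag_mul a b))
  (mag2_mul (tens a one) rb) (tens (mag_mul a b) one) => p q r s t.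
by rewrite !addrA !addrK [_ + r + s]addrAC addrK (addrC p q).
Qed.
End MagmaticAlgebra.

Lemma leaves_gt0 t : (0 < leaves t)%N.
Proof. by elim: t => //= l IHl r _; rewrite ltn_addr. Qed.

Lemma tree_split1_leaves t : tree_split1 t (leaves t) = t.
Proof.
elim: t => //= l _ r IHr.
by rewrite -[X in (_ <= X)%N]addn0 leq_add2l leqNgt leaves_gt0 addKn IHr.
Qed.

Lemma tree_split_right1 t : tree_split_right t 1 = t.
Proof. by elim: t => //= l IHl r _; rewrite ltnNge leaves_gt0 IHl. Qed.

Lemma leaves_tree_split_right t j : (0 < j <= leaves t)%N ->
  leaves (tree_split_right t j) = (leaves t - j).+1.
Proof.
elim: t j => [|l IHl r IHr] j /= /andP[j_gt0 j_le]; first lia.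
case: ltnP => [lt_lj | le_jl] /=.
  rewrite IHr; lia.
rewrite IHl; lia.
Qed.

Section Splitting.
Variables (K : fieldType) (X : choiceType).
Local Notation one := (mag_one K X).
Implicit Types (t l r : btree) (vs : seq (Vsp K X)).

Definition split_tens t vs i : Mag2 K X :=
  tens (elem (tree_split1 t i) (take i vs)) (elem (tree_split2 t i) (drop i vs)).

Definition split_sum t vs : Mag2 K X :=
  \sum_(1 <= i < leaves t) split_tens t vs i.

Lemma split_tens_nodel l r vs i : (0 < i < leaves l)%N ->
  split_tens (BNode l r) vs i =
  mag2_mul (split_tens l (take (leaves l) vs) i) (tens one (elem r (drop (leaves l) vs))).
Proof.
move=> /andP[_ lt_il]; have le_il := ltnW lt_il.
rewrite mag2_mul_tens mag_mulx1 /split_tens /tree_split2 /= le_il ltnS leqNgt lt_il /=.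
rewrite leaves_tree_split_right; last by rewrite /= lt_il.
by rewrite (subnSK lt_il) (take_takel _ le_il) take_drop drop_drop (subnK le_il).
Qed.

Lemma split_tens_node_mid l r vs :
  split_tens (BNode l r) vs (leaves l) =
  tens (elem l (take (leaves l) vs)) (elem r (drop (leaves l) vs)).
Proof.
rewrite /split_tens /tree_split2 /= leqnn ltnSn subSnn.
by rewrite tree_split1_leaves tree_split_right1.
Qed.

Lemma split_tens_noder l r vs j : (0 < j)%N ->
  split_tens (BNode l r) vs (j + leaves l) =
  mag2_mul (tens (elem l (take (leaves l) vs)) one) (split_tens r (drop (leaves l) vs) j).
Proof.
move=> j_gt0; rewrite mag2_mul_tens mag_mul1x /split_tens /tree_split2 /=.
rewrite -[X in (_ <= X)%N]add0n leq_add2r leqNgt j_gt0 ltnS leq_addl /=.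
rewrite addnK -addSn addnK (take_takel _ (leq_addl _ _)).
by rewrite take_drop drop_drop.
Qed.

Lemma split_sum_node l r vs :
  split_sum (BNode l r) vs =
  tens (elem l (take (leaves l) vs)) (elem r (drop (leaves l) vs))
  + mag2_mul (split_sum l (take (leaves l) vs)) (tens one (elem r (drop (leaves l) vs)))
  + mag2_mul (tens (elem l (take (leaves l) vs)) one) (split_sum r (drop (leaves l) vs)).
Proof.
have [l_gt0 r_gt0] := (leaves_gt0 l, leaves_gt0 r).
rewrite /split_sum /= (big_cat_nat l_gt0 (leq_addr _ _)) /=.
have lt_l_lr : (leaves l < leaves l + leaves r)%N.
  by rewrite -[X in (X < _)%N]addn0 ltn_add2l.
rewrite (big_ltn lt_l_lr) split_tens_node_mid.
rewrite -[(leaves l).+1]add1n big_addn addKn.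
rewrite (eq_big_nat _ _ (@split_tens_nodel l r vs)).
rewrite (eq_big_nat _ _ (fun j hj => split_tens_noder l r vs (proj1 (andP hj)))).
by rewrite /mag2_mul bilin_suml bilin_sumr addrCA addrA.
Qed.

Lemma reduced_elem (D : Mag K X -> Mag2 K X) :
  (forall v, D (vinc v) = tens (vinc v) one + tens one (vinc v)) ->
  (forall x y, D (mag_mul x y) =
     mag2_mul (D x) (tens one y) + mag2_mul (tens x one) (D y) - tens x y) ->
  forall t vs, size vs = leaves t -> reduced D (elem t vs) = split_sum t vs.
Proof.
move=> Dv Dmul; elim=> [|l IHl r IHr] vs /= size_vs.
  by rewrite /reduced Dv addrAC addrK subrr /split_sum big_geq.
have size_vl : size (take (leaves l) vs) = leaves l.
  by rewrite size_takel // size_vs leq_addr.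
have size_vr : size (drop (leaves l) vs) = leaves r.
  by rewrite size_drop size_vs addKn.
by rewrite (reduced_mul Dmul) (IHl _ size_vl) (IHr _ size_vr) split_sum_node.
Qed.
End Splitting.

Theorem lemma1p6 (K : fieldType) (X : choiceType)
  (Delta : {linear Mag K X -> Mag2 K X}) :
  Delta (mag_one K X) = tens (mag_one K X) (mag_one K X) ->
  (forall v : Vsp K X,
     Delta (vinc v) = tens (vinc v) (mag_one K X) + tens (mag_one K X) (vinc v)) ->
  (forall x y : Mag K X,
     Delta (mag_mul x y) =
       mag2_mul (Delta x) (tens (mag_one K X) y)
       + mag2_mul (tens x (mag_one K X)) (Delta y) - tens x y) ->
  forall (t : btree) (vs : seq (Vsp K X)), size vs = leaves t ->
  reduced Delta (elem t vs) =
    \sum_(1 <= i < leaves t)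
      tens (elem (tree_split1 t i) (take i vs)) (elem (tree_split2 t i) (drop i vs)).
Proof.
by move=> _; exact: reduced_elem.
Qed.
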